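(* Let $m\ge1$ and let $1\le K\le N$ be integers with $K/N\ge\frac12+\frac1N$. Consider any received word (over a binary erasure channel, each of the $N$ symbols consisting of $m$ bits) in which more than $2(N-K+1)$ symbols contain at least one erased bit. Then under the proportional multiplicity assignment with any $M>0$, the ASD sufficient condition $S\ge\sqrt{2(K-1)C}$ is not satisfied.
   Context: Setting: a Reed–Solomon code of length $N$ and dimension $K$ over $GF(2^m)$ whose symbols are sent as $m$ bits each over a binary erasure channel. If the $j$-th received symbol has $b_j$ erased bits, it is consistent with $2^{b_j}$ candidate symbols. The proportional multiplicity assignment gives each of these candidates multiplicity $M2^{-b_j}$; the score is $S=\sum_j M2^{-b_j}$ and the (approximate) cost is $C=\frac12\sum_j 2^{b_j}(M2^{-b_j})^2$. *)

From mathcomp Require Import all_boot all_order all_algebra.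
Set Implicit Arguments. Unset Strict Implicit. Unset Printing Implicit Defensive.
Import Order.TTheory GRing.Theory Num.Theory.
Local Open Scope ring_scope.

(* Erasure pattern: b j = number of erased bits of the j-th received symbol
   (0 <= b j <= m).  Symbol j is consistent with 2^(b j) candidates. *)

Definition prop_mult (R : realFieldType) (M : R) (b : nat) : R := M * 2 ^- b.

Definition n_cand (R : realFieldType) (b : nat) : R := 2 ^+ b.

Definition score (R : realFieldType) (N : nat) (M : R) (b : 'I_N -> nat) : R :=
  \sum_(j < N) prop_mult M (b j).

Definition cost (R : realFieldType) (N : nat) (M : R) (b : 'I_N -> nat) : R :=
  2^-1 * \sum_(j < N) n_cand R (b j) * (prop_mult M (b j)) ^+ 2.

Definition asd_condition (R : rcfType) (N K : nat) (M : R) (b : 'I_N -> nat) : Prop :=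
  score M b >= Num.sqrt (2 * (K%:R - 1) * cost M b).

From mathcomp Require Import all_boot all_order all_algebra.
From mathcomp Require Import ring lra.
Set Implicit Arguments. Unset Strict Implicit. Unset Printing Implicit Defensive.
Import Order.TTheory GRing.Theory Num.Theory.
Local Open Scope ring_scope.

(** With [X := \sum_j 2^-b_j], the score is [M X] and the cost is [M^2 X / 2],
    so for [M > 0] the ASD condition [M X >= sqrt ((K-1) M^2 X)] is equivalent
    to [X >= K - 1].  Each symbol with an erased bit contributes at most [1/2]
    to [X], so more than [2(N-K+1)] such symbols force [X < N - (N-K+1) = K-1]. *)

Definition inv_cand_sum (R : realFieldType) (N : nat) (b : 'I_N -> nat) : R :=
  \sum_(j < N) 2 ^- b j.

Section ScoreCost.

Variables (R : realFieldType) (N : nat) (M : R) (b : 'I_N -> nat).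

Lemma scoreE : score M b = M * inv_cand_sum R b.
Proof. by rewrite /score mulr_sumr. Qed.

Lemma costE : cost M b = 2^-1 * M ^+ 2 * inv_cand_sum R b.
Proof.
rewrite /cost /inv_cand_sum -[RHS]mulrA [in RHS]mulr_sumr; congr (_ * _).
apply: eq_bigr => j _; rewrite /n_cand /prop_mult.
have nz2b : (2 ^+ b j : R) != 0 by rewrite expf_neq0 // pnatr_eq0.
by field.
Qed.

End ScoreCost.

Lemma inv_cand_sum_gt0 (R : realFieldType) (N : nat) (b : 'I_N -> nat) :
  (0 < N)%N -> 0 < inv_cand_sum R b.
Proof.
move=> N_gt0; rewrite /inv_cand_sum (bigD1 (Ordinal N_gt0)) //=.
rewrite ltr_pwDl ?invr_gt0 ?exprn_gt0 //.
by apply: sumr_ge0 => j _; rewrite invr_ge0 exprn_ge0.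
Qed.

Lemma invr_exp2_le_half (R : realFieldType) (n : nat) :
  (1 <= n)%N -> (2 ^- n : R) <= 2^-1.
Proof. by move=> n_gt0; rewrite lef_pV2 ?posrE ?exprn_gt0 // ler_eXnr ?ler1n. Qed.

Lemma inv_cand_sum_le (R : realFieldType) (N : nat) (b : 'I_N -> nat) :
  inv_cand_sum R b <= N%:R - #|[set j | (1 <= b j)%N]|%:R / 2.
Proof.
set E := [set j | (1 <= b j)%N].
have term_le j : (2 ^- b j : R) <= 1 - (j \in E)%:R / 2.
  rewrite inE; case: (b j) => [|n] /=; first by rewrite expr0 invr1; lra.
  by have := @invr_exp2_le_half R n.+1 isT; lra.
apply: (le_trans (ler_sum _ (fun j _ => term_le j))).
by rewrite sumrB sumr_const card_ord -mulr_suml -natr_sum -sum1_card [in leRHS]big_mkcond.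
Qed.

Lemma asd_conditionE (R : rcfType) (N K : nat) (M : R) (b : 'I_N -> nat) :
  0 < M -> 0 < inv_cand_sum R b ->
  asd_condition K M b <-> K%:R - 1 <= inv_cand_sum R b.
Proof.
move=> M_gt0 X_gt0; set X := inv_cand_sum R b.
have MX_ge0 : 0 <= M * X by rewrite mulr_ge0 ?ltW.
rewrite /asd_condition scoreE costE -[M * X]ger0_norm // -sqrtr_sqr ler_sqrt;
  last by rewrite sqr_ge0.
have -> : 2 * (K%:R - 1) * (2^-1 * M ^+ 2 * X) = (M ^+ 2 * X) * (K%:R - 1).
  by field.
by rewrite exprMn [X ^+ 2]expr2 mulrA ler_pM2l ?mulr_gt0 ?exprn_gt0.
Qed.

Theorem corollary1 (R : rcfType) (m N K : nat) (b : 'I_N -> nat) (M : R) :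
  (1 <= m)%N -> (1 <= K)%N -> (K <= N)%N ->
  K%:R / N%:R >= 2^-1 + N%:R^-1 :> R ->
  (forall j, (b j <= m)%N) ->
  (#|[set j | (1 <= b j)%N]| > 2 * (N - K + 1))%N ->
  0 < M ->
  ~ @asd_condition R N K M b.
Proof.
move=> _ K_gt0 K_le_N _ _ many_erased M_gt0.
have N_gt0 : (0 < N)%N := leq_trans K_gt0 K_le_N.
rewrite asd_conditionE ?inv_cand_sum_gt0 //.
have := inv_cand_sum_le R b.
move: many_erased; rewrite -(ltr_nat R) natrM natrD natrB //.
lra.
Qed.
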